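(* Let $S$ be a group and $A,B$ left $S$-acts without zero subacts. Then: (i) $A$ and $B\amalg z$ are not geometrically equivalent; (ii) $A$ and $B\amalg(z_1\amalg z_2)$ are not geometrically equivalent.
   Context: A left $S$-act is a nonempty set with an action $S\times A\to A$ satisfying $1a=a$, $(st)a=s(ta)$; homomorphisms preserve the action; $\amalg$ denotes coproduct (disjoint union). A zero $S$-act is a one-element $S$-act; $z,z_1,z_2$ denote zero $S$-acts. A zero subact is a one-element subact. For a nonempty finite set $X$, $F_X=\coprod_{x\in X}S_x$ is the free $S$-act on $X$. For an $S$-act $G$ and a relation $T\subseteq F_X\times F_X$, $T'_G=\{\mu:F_X\to G \text{ homomorphism}: T\subseteq\ker\mu\}$ and $T''_G=\bigcap_{\mu\in T'_G}\ker\mu$ (empty intersection $=F_X\times F_X$). $S$-acts $G_1,G_2$ are geometrically equivalent iff $T''_{G_1}=T''_{G_2}$ for all nonempty finite $X$ and all $T\subseteq F_X\times F_X$. *)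

From Stdlib Require Import List.
Set Implicit Arguments.

Record Group := {
  g_car :> Type;
  g_mul : g_car -> g_car -> g_car;
  g_one : g_car;
  g_inv : g_car -> g_car;
  g_mulA : forall x y z, g_mul x (g_mul y z) = g_mul (g_mul x y) z;
  g_mul1l : forall x, g_mul g_one x = x;
  g_mul1r : forall x, g_mul x g_one = x;
  g_mulVl : forall x, g_mul (g_inv x) x = g_one;
  g_mulVr : forall x, g_mul x (g_inv x) = g_one
}.

Record Act (S : Group) := {
  a_car :> Type;
  a_act : g_car S -> a_car -> a_car;
  a_act1 : forall a, a_act (g_one S) a = a;
  a_actM : forall s t a, a_act (g_mul S s t) a = a_act s (a_act t a);
  a_nonempty : inhabited a_car
}.
Arguments a_act {S} _ _ _.

Definition coprod_act_fun (S : Group) (A B : Act S) (s : S) (p : A + B) : A + B :=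
  match p with inl a => inl (a_act A s a) | inr b => inr (a_act B s b) end.

Definition coprod (S : Group) (A B : Act S) : Act S.
Proof.
  refine {| a_car := (A + B)%type; a_act := coprod_act_fun A B |}.
  - intros [a|b]; simpl; f_equal; apply a_act1.
  - intros s t [a|b]; simpl; f_equal; apply a_actM.
  - destruct (a_nonempty A) as [a]; exact (inhabits (inl a)).
Defined.

Definition is_zero_act (S : Group) (Z : Act S) : Prop :=
  forall a b : Z, a = b.

(* A zero subact of A: a one-element subact, i.e. a fixed point {a}. *)
Definition is_zero_subact (S : Group) (A : Act S) (a : A) : Prop :=
  forall s : S, a_act A s a = a.

Definition no_zero_subacts (S : Group) (A : Act S) : Prop :=
  forall a : A, ~ is_zero_subact A a.

Definition finite_nonempty (X : Type) : Prop :=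
  inhabited X /\ exists l : list X, forall x : X, In x l.

(* The free S-act F_X = coprod_{x in X} S_x, carrier X * S, action s(x,t) = (x, st). *)
Definition free_act_fun (S : Group) (X : Type) (s : S) (p : X * S) : X * S :=
  (fst p, g_mul S s (snd p)).

Definition is_hom_free (S : Group) (X : Type) (G : Act S) (mu : X * S -> G) : Prop :=
  forall (s : S) (p : X * S), mu (@free_act_fun S X s p) = a_act G s (mu p).

Definition T_prime (S : Group) (X : Type) (G : Act S) (T : X * S -> X * S -> Prop)
  (mu : X * S -> G) : Prop :=
  is_hom_free G mu /\ forall p q, T p q -> mu p = mu q.

(* T''_G : intersection of the kernels of all mu in T'_G (full relation if empty). *)
Definition T_second (S : Group) (X : Type) (G : Act S) (T : X * S -> X * S -> Prop)
  (p q : X * S) : Prop :=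
  forall mu : X * S -> G, T_prime G T mu -> mu p = mu q.

Definition geom_equiv (S : Group) (G1 G2 : Act S) : Prop :=
  forall (X : Type), finite_nonempty X ->
  forall (T : X * S -> X * S -> Prop) (p q : X * S),
    T_second G1 T p q <-> T_second G2 T p q.

(* An act without zero subacts admits no homomorphism F_X -> A collapsing a whole
   component S_x of the free act, since the image of that component would be a
   fixed point. Hence for T = S_x × S_x the closure T''_A is the full relation.
   An act with a zero subact {e} and some other element b does admit such a
   homomorphism (send S_x to e and another component S_y onto the orbit of b), so
   there T'' separates S_x from S_y. Both B ∐ z and B ∐ (z1 ∐ z2) are of this second kind. *)
From Stdlib Require Import List.
Import ListNotations.
Set Implicit Arguments.

Lemma finite_nonempty_bool : finite_nonempty bool.
Proof.
  split.
  - exact (inhabits true).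
  - exists [true; false]. intros [|]; simpl; auto.
Qed.

Section CollapsedComponent.

Variable S : Group.

Definition collapse_true (p q : bool * S) : Prop := fst p = true /\ fst q = true.

Lemma T_prime_collapse_true_zero_subact (G : Act S) (mu : bool * S -> G) :
  T_prime G collapse_true mu -> is_zero_subact G (mu (true, g_one S)).
Proof.
  intros [Hhom Hker] s.
  rewrite <- Hhom. unfold free_act_fun; simpl.
  rewrite g_mul1r. symmetry. apply Hker. split; reflexivity.
Qed.

Lemma T_second_collapse_true_full (A : Act S) (p q : bool * S) :
  no_zero_subacts A -> T_second A collapse_true p q.
Proof.
  intros hA mu Hmu. exfalso.
  exact (hA _ (T_prime_collapse_true_zero_subact Hmu)).
Qed.

Lemma not_T_second_collapse_true (G : Act S) (e b : G) :
  is_zero_subact G e -> b <> e ->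
  ~ T_second G collapse_true (false, g_one S) (true, g_one S).
Proof.
  intros he hbe Hsec.
  pose (mu := fun p : bool * S => if fst p then e else a_act G (snd p) b).
  assert (Hmu : T_prime G collapse_true mu).
  { split.
    - intros s [[|] t]; unfold mu, free_act_fun; simpl.
      + symmetry; apply he.
      + apply a_actM.
    - intros p q [Hp Hq]. unfold mu. rewrite Hp, Hq. reflexivity. }
  apply hbe. rewrite <- (a_act1 G b). exact (Hsec mu Hmu).
Qed.

Lemma not_geom_equiv_zero_subact (A G : Act S) (e b : G) :
  no_zero_subacts A -> is_zero_subact G e -> b <> e -> ~ geom_equiv A G.
Proof.
  intros hA he hbe Heq.
  apply (not_T_second_collapse_true he hbe).
  apply (Heq bool finite_nonempty_bool).
  apply T_second_collapse_true_full, hA.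
Qed.

Lemma zero_act_zero_subact (Z : Act S) (c : Z) :
  is_zero_act Z -> is_zero_subact Z c.
Proof. intros hZ s. apply hZ. Qed.

Lemma coprod_zero_subact_l (A B : Act S) (a : A) :
  is_zero_subact A a -> is_zero_subact (coprod A B) (inl a).
Proof. intros ha s. simpl. f_equal. apply ha. Qed.

Lemma coprod_zero_subact_r (A B : Act S) (b : B) :
  is_zero_subact B b -> is_zero_subact (coprod A B) (inr b).
Proof. intros hb s. simpl. f_equal. apply hb. Qed.

End CollapsedComponent.

Theorem proposition3p17 (S : Group) (A B : Act S)
  (hA : no_zero_subacts A) (hB : no_zero_subacts B) :
  (forall z : Act S, is_zero_act z -> ~ geom_equiv A (coprod B z)) /\
  (forall z1 z2 : Act S, is_zero_act z1 -> is_zero_act z2 ->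
     ~ geom_equiv A (coprod B (coprod z1 z2))).
Proof.
  destruct (a_nonempty B) as [b].
  split.
  - intros z hz. destruct (a_nonempty z) as [c].
    apply (@not_geom_equiv_zero_subact S A (coprod B z) (inr c) (inl b) hA).
    + apply coprod_zero_subact_r, zero_act_zero_subact, hz.
    + discriminate.
  - intros z1 z2 hz1 _. destruct (a_nonempty z1) as [c].
    apply (@not_geom_equiv_zero_subact S A (coprod B (coprod z1 z2)) (inr (inl c)) (inl b) hA).
    + apply coprod_zero_subact_r, coprod_zero_subact_l, zero_act_zero_subact, hz1.
    + discriminate.
Qed.
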